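(* Let $\mathcal{M}\subset\mathbb{R}^n$ be a symmetric real algebraic variety, i.e. $\mathcal{M}=\{x\in\mathbb{R}^n:p(x)=0\}$ for some real polynomial $p$, and $\sigma\mathcal{M}=\mathcal{M}$ for every permutation $\sigma$ of the coordinates. Then $\lambda^{-1}(\mathcal{M})=\{X\in\mathbf{S}^n:\lambda(X)\in\mathcal{M}\}$ is an algebraic variety of $\mathbf{S}^n$, i.e. the zero set of a polynomial in the entries of $X$.
   Context: $\mathbf{S}^n$ is the space of real symmetric $n\times n$ matrices; $\lambda(X)\in\mathbb{R}^n$ is the vector of eigenvalues of $X$ counted with multiplicity and ordered nonincreasingly. Permutations act on $\mathbb{R}^n$ by permuting coordinates: $(\sigma x)_i=x_{\sigma^{-1}(i)}$. *)

From HB Require Import structures.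
From mathcomp Require Import all_boot all_order all_algebra all_fingroup.
From mathcomp Require Import mpoly.
From mathcomp Require Import reals.
From Stdlib Require Import ClassicalEpsilon.
Set Implicit Arguments. Unset Strict Implicit. Unset Printing Implicit Defensive.
Import Order.TTheory GRing.Theory Num.Theory.
Local Open Scope ring_scope.

Definition symmx (R : realType) (n : nat) (X : 'M[R]_n) : Prop := X^T = X.

Definition is_eigvals (R : realType) (n : nat) (X : 'M[R]_n) (l : 'I_n -> R) : Prop :=
  char_poly X = \prod_(i < n) ('X - (l i)%:P) /\
  (forall i j : 'I_n, (i <= j)%N -> l j <= l i).

(* lambda(X) : the nonincreasingly ordered eigenvalue vector (well defined for
   symmetric X; an arbitrary value otherwise). *)
Definition eigvals (R : realType) (n : nat) (X : 'M[R]_n) : 'I_n -> R :=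
  epsilon (inhabits (fun _ => 0)) (is_eigvals X).

Definition perm_act (R : realType) (n : nat) (s : 'S_n) (x : 'I_n -> R) : 'I_n -> R :=
  fun i => x ((s^-1)%g i).

Definition entries (R : realType) (n : nat) (X : 'M[R]_n) : 'I_(n * n) -> R :=
  fun k => mxvec X 0 k.

From HB Require Import structures.
From mathcomp Require Import all_boot all_order all_algebra all_fingroup.
From mathcomp Require Import mpoly.
From mathcomp Require Import reals.
From mathcomp Require complex.
From Stdlib Require Import ClassicalEpsilon.
Set Implicit Arguments. Unset Strict Implicit. Unset Printing Implicit Defensive.
Import Order.TTheory GRing.Theory Num.Theory.
Local Open Scope ring_scope.

(* The polynomial P := prod_s (p o s) is symmetric and has the same zero set
   as p, so by the fundamental theorem of symmetric polynomials it is a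
   polynomial in the elementary symmetric functions.  Evaluated at lambda(X),
   these are, up to sign, the coefficients of the characteristic polynomial of
   X, which are polynomials in the entries of X.  Symmetry of X is only needed
   to know that its characteristic polynomial splits over the reals. *)

Section SymmetricMatrixSpectrum.
Import complex.
Local Open Scope complex_scope.
Variables (R : rcfType) (n : nat).

Lemma symmetric_eigenvalue_real (X : 'M[R]_n) (z : R[i]) :
  X^T = X -> eigenvalue (map_mx (real_complex R) X) z -> z = (Re z)%:C.
Proof.
move=> sym_X /eigenvalueP [v Xv nz_v].
set Xc := map_mx (real_complex R) X in Xv.
set w := map_mx conjc v.
have conj_Xc : map_mx conjc Xc = Xc by apply/matrixP=> i j; rewrite !mxE conjc_real.
have sym_Xc : Xc^T = Xc.
  by apply/matrixP=> i j; rewrite !mxE -[in RHS]sym_X mxE.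
have wX : w *m Xc = z^* *: w by rewrite -{1}conj_Xc -map_mxM Xv map_mxZ.
(* Compute v Xc w^T in two ways; v w^T = sum_j |v_j|^2 is nonzero. *)
have eq_z_conj : z *: (v *m w^T) = z^* *: (v *m w^T).
  by rewrite scalemxAl -Xv -mulmxA -{1}sym_Xc -trmx_mul wX linearZ -scalemxAr.
set s := (v *m w^T) 0 0.
have nz_s : s != 0.
  rewrite /s !mxE psumr_eq0; last by move=> j _; rewrite !mxE mulcJ_ge0.
  apply: contra nz_v => /allP v0; apply/eqP/matrixP=> i j.
  rewrite (ord1 i) mxE; have := v0 j (mem_index_enum _).
  by rewrite !mxE mulf_eq0 conjc_eq0 orbb => /eqP.
have conj_z : z^* = z.
  apply: (mulIf nz_s); symmetry.
  move/(congr1 (fun M : 'M[R[i]]_1 => M 0 0)): eq_z_conj.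
  by rewrite mxE [X in _ = X -> _]mxE.
by rewrite ReJ_add conj_z -mulr2n -[z *+ 2]mulr_natr mulfK ?pnatr_eq0.
Qed.

Lemma symmetric_char_poly_split (X : 'M[R]_n) :
  X^T = X -> exists2 s : seq R, size s = n & char_poly X = \prod_(x <- s) ('X - x%:P).
Proof.
move=> sym_X.
have [r rP] := closed_field_poly_normal (char_poly (map_mx (real_complex R) X)).
rewrite (monicP (char_poly_monic _)) scale1r in rP.
have r_real z : z \in r -> z = (Re z)%:C.
  move=> zr; apply: (symmetric_eigenvalue_real sym_X).
  by rewrite eigenvalue_root_char rP root_prod_XsubC.
have split_X : char_poly X = \prod_(x <- [seq Re z | z <- r]) ('X - x%:P).
  apply: (map_poly_inj (real_complex R)).
  rewrite map_char_poly rP rmorph_prod big_map; apply: eq_big_seq => z zr.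
  by rewrite rmorphB /= map_polyX map_polyC /= -r_real.
exists [seq Re z | z <- r] => //.
by have := size_char_poly X; rewrite split_X size_prod_XsubC => -[].
Qed.

End SymmetricMatrixSpectrum.

Lemma prod_XsubC_sort_nonincr (R : realDomainType) (n : nat) (s : seq R) :
  size s = n ->
  exists l : 'I_n -> R, \prod_(x <- s) ('X - x%:P) = \prod_(i < n) ('X - (l i)%:P)
    /\ (forall i j : 'I_n, (i <= j)%N -> l j <= l i).
Proof.
move=> size_s; set t := sort (fun x y => y <= x) s.
have size_t : size t = n by rewrite size_sort.
exists (fun i => nth 0 t i); split.
  rewrite (perm_big t); last by rewrite perm_sym perm_sort.
  by rewrite (big_nth 0) size_t big_mkord.
move=> i j le_ij.
have ge_trans : transitive (fun x y : R => y <= x).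
  by move=> a b c ba cb; exact: le_trans cb ba.
have t_sorted : sorted (fun x y : R => y <= x) t.
  by apply: sort_sorted => x y; exact: le_total.
by apply: (sorted_leq_nth ge_trans (@lexx _ _) 0 t_sorted); rewrite // inE size_t.
Qed.

Lemma eigvalsP (R : realType) (n : nat) (X : 'M[R]_n) :
  symmx X -> is_eigvals X (eigvals X).
Proof.
move=> sym_X; apply: epsilon_spec; rewrite /is_eigvals.
have [s size_s ->] := symmetric_char_poly_split sym_X.
exact: prod_XsubC_sort_nonincr.
Qed.

Section GenericMatrix.
Variables (R : idomainType) (n : nat).

Definition genmx : 'M[{mpoly R[n * n]}]_n :=
  \matrix_(i, j) 'X_(mxvec_index i j).

Lemma map_meval_genmx (X : 'M[R]_n) :
  map_mx (meval (fun k => mxvec X 0 k)) genmx = X.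
Proof. by apply/matrixP=> i j; rewrite !mxE mevalXU mxvecE. Qed.

(* The k-th elementary symmetric function of the eigenvalues, as a polynomial
   in the entries of the matrix. *)
Definition char_mesym (k : nat) : {mpoly R[n * n]} :=
  (-1) ^+ k * (char_poly genmx)`_(n - k).

Lemma meval_char_mesym (X : 'M[R]_n) (l : 'I_n -> R) (k : nat) :
  char_poly X = \prod_(i < n) ('X - (l i)%:P) -> (k <= n)%N ->
  (char_mesym k).@[fun k => mxvec X 0 k] = (mesym n R k).@[l].
Proof.
move=> split_X le_kn.
rewrite rmorphM rmorphXn rmorphN1 /= -coef_map map_char_poly map_meval_genmx.
have := mroots_coeff [tuple l i | i < n] (inord k).
rewrite big_tuple (eq_bigr (fun j => 'X - (l j)%:P)) => [|j _];
  last by rewrite tnth_mktuple.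
rewrite -split_X inordK ?ltnS // => ->.
rewrite mulrA -exprMn mulrNN mulr1 expr1n mul1r.
by apply: meval_eq => j; rewrite tnth_mktuple.
Qed.

End GenericMatrix.

Section Symmetrization.
Variables (R : idomainType) (n : nat).
Implicit Types (p : {mpoly R[n]}) (x : 'I_n -> R).

Lemma meval_msym (s : 'S_n) p x : (msym s p).@[x] = p.@[fun i => x (s i)].
Proof.
rewrite -[msym s p]comp_mpoly_id msym_mPo comp_mpoly_meval.
by apply: meval_eq => i; rewrite !tnth_mktuple mevalXU.
Qed.

Definition msymprod p : {mpoly R[n]} := \prod_(s : 'S_n) msym s p.

Lemma msymprod_sym p : msymprod p \is symmetric.
Proof.
apply/issymP => s; rewrite rmorph_prod [RHS](reindex_inj (mulIg s)) /=.
by apply: eq_bigr => t _; rewrite msymMm.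
Qed.

Lemma meval_msymprod_eq0 p x :
  (forall (s : 'S_n) y, p.@[fun i => y (s i)] = 0 -> p.@[y] = 0) ->
  (msymprod p).@[x] = 0 <-> p.@[x] = 0.
Proof.
move=> p_perm; rewrite rmorph_prod /=; split.
  by move/eqP/prodf_eq0 => [s _ /eqP]; rewrite meval_msym => /p_perm.
move=> px0; apply/eqP/prodf_eq0; exists 1%g => //.
by rewrite meval_msym -px0; apply/eqP/meval_eq => i; rewrite perm1.
Qed.

End Symmetrization.

Theorem proposition1p1 (R : realType) (n : nat) (p : {mpoly R[n]}) :
  (forall (s : 'S_n) (x : 'I_n -> R),
      p.@[perm_act s x] = 0 <-> p.@[x] = 0) ->
  exists q : {mpoly R[n * n]},
    forall X : 'M[R]_n, symmx X ->
      (q.@[entries X] = 0 <-> p.@[eigvals X] = 0).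
Proof.
move=> p_sym.
have p_perm (s : 'S_n) y : p.@[fun i => y (s i)] = 0 -> p.@[y] = 0.
  move=> py0; apply/(p_sym s^-1%g); rewrite -py0; apply: meval_eq => i.
  by rewrite /perm_act invgK.
pose S := [tuple mesym n R i.+1 | i < n].
pose T := [tuple char_mesym R n i.+1 | i < n].
have [t [tP _]] := sym_fundamental (msymprod_sym p).
exists (t \mPo T) => X sym_X.
have [split_X _] := eigvalsP sym_X.
have eval_T : (fun i => (tnth T i).@[entries X]) =1 (fun i => (tnth S i).@[eigvals X]).
  by move=> i; rewrite !tnth_mktuple (meval_char_mesym split_X).
by rewrite -(meval_msymprod_eq0 _ p_perm) -tP !comp_mpoly_meval (meval_eq t eval_T).
Qed.
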